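(* For every integer $n\ge 1$, $$B_{2^{n+1}-i}(t)-B_{2^{n}+i}(t)=\begin{cases} t(t-1)\,B_{2^{n-1}-i}(t) & \text{for } i=0,1,\dots,2^{n-1},\\ -t(t-1)\,B_{i-2^{n-1}}(t) & \text{for } i=2^{n-1}+1,\dots,2^{n}.\end{cases}$$
   Context: The Stern polynomials $B_n(t)\in\mathbb{Z}[t]$, $n\ge 0$, are defined by $B_0(t)=0$, $B_1(t)=1$, $B_{2n}(t)=tB_n(t)$ and $B_{2n+1}(t)=B_n(t)+B_{n+1}(t)$ for $n\ge 1$. *)

From HB Require Import structures.
From mathcomp Require Import all_boot all_order all_algebra.
Set Implicit Arguments. Unset Strict Implicit. Unset Printing Implicit Defensive.
Import Order.TTheory GRing.Theory Num.Theory.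
Local Open Scope ring_scope.

(* Fuel-based recursion: stern_fuel k n follows the defining recurrence
   B_0 = 0, B_1 = 1, B_{2m} = t B_m, B_{2m+1} = B_m + B_{m+1} (m >= 1);
   with fuel k > n the result is independent of k. *)
Fixpoint stern_fuel (k n : nat) : {poly int} :=
  match k with
  | 0 => 0
  | k'.+1 =>
    if n == 0%N then 0
    else if n == 1%N then 1
    else if ~~ odd n then 'X * stern_fuel k' n./2
    else stern_fuel k' n./2 + stern_fuel k' n./2.+1
  end.

Definition stern (n : nat) : {poly int} := stern_fuel n.+1 n.

From HB Require Import structures.
From mathcomp Require Import all_boot all_order all_algebra.
From mathcomp Require Import zify ring.
Import GRing.Theory.
Local Open Scope ring_scope.

(* Write p = 2^m and consider, for i <= 2p, the difference
     D_m(i) = B_{4p - i} - B_{2p + i}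
   and the "signed gap"
     G_m(i) = B_{p - i} if i <= p,   G_m(i) = - B_{i - p} otherwise.
   The theorem says D_m(i) = t (t - 1) G_m(i), the case n = m + 1.
   First the fuel-based definition of [stern] is shown to satisfy the
   recurrences B_{2k} = t B_k and B_{2k+1} = B_k + B_{k+1}.  Both D and G
   then obey the same recurrences in i when passing from m to m + 1:
     X(m+1, 2j) = t X(m, j),   X(m+1, 2j+1) = X(m, j) + X(m, j+1),
   (for G this uses G_m(p) = 0, since B_0 = 0).  The identity is checked
   directly for m = 0, and follows for all m by induction, splitting i
   according to its parity. *)

Lemma stern_fuel_indep k k' n : (n < k)%N -> (n < k')%N ->
  stern_fuel k n = stern_fuel k' n.
Proof.
elim: k k' n => [|k IH] [|k'] n //= hk hk'.
case: eqP => // /eqP n0; case: eqP => // /eqP n1.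
have e := odd_double_half n; rewrite -muln2 in e.
by case: (odd n) e => /= e; rewrite (IH k' n./2) ?(IH k' n./2.+1) //; lia.
Qed.

Lemma stern_fuelE k n : (n < k)%N -> stern_fuel k n = stern n.
Proof. by move=> h; apply: stern_fuel_indep. Qed.

Lemma stern_rec n : (1 < n)%N -> stern n =
  if ~~ odd n then 'X * stern n./2 else stern n./2 + stern n./2.+1.
Proof.
move=> n2; rewrite [LHS]/stern [stern_fuel _ n]/=.
have e := odd_double_half n; rewrite -muln2 in e.
rewrite ifF; last by apply/eqP; lia.
rewrite ifF; last by apply/eqP; lia.
by case: (odd n) e => /= e; rewrite !stern_fuelE; try lia.
Qed.

Lemma stern_even m : stern (2 * m) = 'X * stern m.
Proof.
case: m => [|m]; first by rewrite mulr0.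
by rewrite stern_rec ?mul2n ?odd_double ?doubleK //; lia.
Qed.

Lemma stern_odd m : stern (2 * m).+1 = stern m + stern m.+1.
Proof.
case: m => [|m]; first by rewrite add0r.
rewrite stern_rec ?mul2n /= ?odd_double ?uphalf_double //; lia.
Qed.

Definition stern_diff (m i : nat) : {poly int} :=
  stern (2 ^ m.+2 - i) - stern (2 ^ m.+1 + i).

Definition stern_gap (m i : nat) : {poly int} :=
  if (i <= 2 ^ m)%N then stern (2 ^ m - i) else - stern (i - 2 ^ m).

Lemma stern_diff_even m j : stern_diff m.+1 (2 * j) = 'X * stern_diff m j.
Proof.
by rewrite /stern_diff !expnS -mulnBr -mulnDr !stern_even mulrBr.
Qed.

Lemma stern_diff_odd m j : (j < 2 ^ m.+2)%N ->
  stern_diff m.+1 (2 * j).+1 = stern_diff m j + stern_diff m j.+1.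
Proof.
rewrite /stern_diff !expnS; set p := (2 ^ m)%N => hj.
have -> : (2 * (2 * (2 * p)) - (2 * j).+1 = (2 * (2 * (2 * p) - j.+1)).+1)%N.
  by lia.
rewrite addnS -mulnDr !stern_odd.
have -> : ((2 * (2 * p) - j.+1).+1 = 2 * (2 * p) - j)%N by lia.
rewrite -addnS; ring.
Qed.

(* So does G; in the odd case at j = 2^m both sides vanish since B_0 = 0. *)
Lemma stern_gap_even m j : stern_gap m.+1 (2 * j) = 'X * stern_gap m j.
Proof.
rewrite /stern_gap expnS leq_pmul2l // -mulnBr -mulnBr !stern_even.
by case: ifP; rewrite ?mulrN.
Qed.

Lemma stern_gap_odd m j :
  stern_gap m.+1 (2 * j).+1 = stern_gap m j + stern_gap m j.+1.
Proof.
rewrite /stern_gap expnS; set p := (2 ^ m)%N.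
have [hj | hj | ->] := ltngtP j p.
- rewrite !ifT; try lia.
  have -> : (2 * p - (2 * j).+1 = (2 * (p - j.+1)).+1)%N by lia.
  have -> : (p - j = (p - j.+1).+1)%N by lia.
  by rewrite stern_odd addrC.
- rewrite !ifF; try (apply/negbTE; lia).
  have -> : ((2 * j).+1 - 2 * p = (2 * (j - p)).+1)%N by lia.
  have -> : (j.+1 - p = (j - p).+1)%N by lia.
  by rewrite stern_odd opprD.
- by rewrite ltnn !subSnn subnn sub0r.
Qed.

Lemma stern_diff_gap m i : (i <= 2 ^ m.+1)%N ->
  stern_diff m i = 'X * ('X - 1) * stern_gap m i.
Proof.
elim: m i => [|m IH] i hi.
  have s2 : stern 2 = 'X by rewrite (stern_even 1) mulr1.
  have s3 : stern 3 = 1 + 'X by rewrite (stern_odd 1) s2.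
  have s4 : stern 4 = 'X * 'X by rewrite (stern_even 2) s2.
  rewrite /stern_diff /stern_gap.
  by case: i hi => [|[|[|i]]] //= _; rewrite ?s2 ?s3 ?s4; ring.
have [j [ei | ei]] : exists j, i = (2 * j)%N \/ i = (2 * j).+1.
  exists i./2; have := odd_double_half i; rewrite -muln2.
  by case: (odd i) => /= e; [right | left]; lia.
all: subst i; rewrite !expnS in hi IH.
- by rewrite stern_diff_even stern_gap_even IH; [ring | lia].
- rewrite stern_diff_odd ?stern_gap_odd ?IH; first ring.
  all: rewrite ?expnS; lia.
Qed.

Theorem theorem2p3 (n i : nat) : (1 <= n)%N ->
  ((i <= 2 ^ n.-1)%N ->
     stern (2 ^ n.+1 - i) - stern (2 ^ n + i)
     = 'X * ('X - 1) * stern (2 ^ n.-1 - i)) /\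
  ((2 ^ n.-1 < i <= 2 ^ n)%N ->
     stern (2 ^ n.+1 - i) - stern (2 ^ n + i)
     = - ('X * ('X - 1) * stern (i - 2 ^ n.-1))).
Proof.
case: n => [|m] // _ /=.
have diffE := stern_diff_gap m i; rewrite /stern_diff /stern_gap in diffE.
split => [hi | /andP [hlo hhi]].
- by rewrite diffE ?hi //; rewrite expnS; lia.
- by rewrite diffE // ifF ?mulrN //; apply/negbTE; lia.
Qed.
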